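(* Let $q=27/25$ and $\Delta=6$. The function $t\mapsto \big(g_2(e^t)\big)^q$ is concave on the interval $\big[\ln(3/4),\ \ln\big(1-\frac{1}{(2^{\Delta-1}+1)^2}\big)\big]$.
   Context: $h(t)=(1-t)\left[\psi-\left(\frac{t}{1-t}\right)^{\chi}\right]$ with $\psi=13/10$, $\chi=1/2$, and $g_2(y)=\frac{1-y}{y}\,h\big((1-y)^{1/2}\big)$. *)

From Stdlib Require Import Reals.
Open Scope R_scope.

Definition psi : R := 13 / 10.
Definition chi : R := 1 / 2.

Definition h (t : R) : R := (1 - t) * (psi - Rpower (t / (1 - t)) chi).

Definition g2 (y : R) : R := (1 - y) / y * h (Rpower (1 - y) (1 / 2)).

Definition q : R := 27 / 25.
Definition Delta_deg : nat := 6.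

Definition concave_on (f : R -> R) (a b : R) : Prop :=
  forall x y lam, a <= x <= b -> a <= y <= b -> 0 <= lam <= 1 ->
    lam * f x + (1 - lam) * f y <= f (lam * x + (1 - lam) * y).

From Stdlib Require Import Reals Lra Psatz.
From Coquelicot Require Import Coquelicot.
Open Scope R_scope.

(* Put s = sqrt (1 - e^t), the argument of h in g2 (e^t), and u = sqrt (s / (1 - s)), the
   power (s / (1 - s))^chi occurring in h.  Eliminating s = u^2 / (1 + u^2) and e^t = 1 - s^2
   gives g2 (e^t) = G u := u^4 (psi - u) / M u with M u = (1 + 2 u^2) (1 + u^2), while
   du/dt = - M u / (4 u^3).  By the chain rule the derivative of t |-> G (u t) ^ q is
   slope (u t), and the derivative of slope has the sign of - Q u for an explicit polynomial Q
   of degree 10 which is negative on [7/40, 1].  On the interval of the theorem u decreases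
   from 1 to 1/sqrt 32 > 7/40, so the derivative slope (u t) is nonincreasing in t. *)

Lemma MVT_interval (f df : R -> R) (a b : R) :
  a <= b -> (forall x, a <= x <= b -> is_derive f x (df x)) ->
  exists c, a <= c <= b /\ f b - f a = df c * (b - a).
Proof.
intros hab hf. destruct (MVT_gen f a b df) as [c [hc e]];
  rewrite ?Rmin_left, ?Rmax_right in * by lra.
- intros x hx. apply hf; lra.
- intros x hx. apply continuity_pt_filterlim, (ex_derive_continuous (V := R_NormedModule)).
  eexists; apply hf; exact hx.
- exists c; split; assumption.
Qed.

Lemma nondecreasing_of_derive_nonneg (f df : R -> R) (a b : R) :
  (forall x, a <= x <= b -> is_derive f x (df x)) -> (forall x, a <= x <= b -> 0 <= df x) ->
  forall x y, a <= x <= y -> y <= b -> f x <= f y.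
Proof.
intros hf hdf x y hxy hy.
destruct (MVT_interval f df x y) as [c [hc e]]; [lra | intros z hz; apply hf; lra |].
assert (0 <= df c) by (apply hdf; lra). nra.
Qed.

Lemma concave_on_of_derive_nonincreasing (f df : R -> R) (a b : R) :
  (forall x, a <= x <= b -> is_derive f x (df x)) ->
  (forall x y, a <= x <= y -> y <= b -> df y <= df x) -> concave_on f a b.
Proof.
intros hf hdf.
assert (ordered : forall x y lam, a <= x <= y -> y <= b -> 0 <= lam <= 1 ->
          lam * f x + (1 - lam) * f y <= f (lam * x + (1 - lam) * y)).
{ intros x y lam hxy hy hlam. set (z := lam * x + (1 - lam) * y).
  assert (hz : x <= z <= y) by (unfold z; nra).
  destruct (MVT_interval f df x z) as [c1 [hc1 e1]]; [lra | intros; apply hf; lra |].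
  destruct (MVT_interval f df z y) as [c2 [hc2 e2]]; [lra | intros; apply hf; lra |].
  assert (hc12 : df c2 <= df c1) by (apply hdf; lra).
  replace (z - x) with ((1 - lam) * (y - x)) in e1 by (unfold z; ring).
  replace (y - z) with (lam * (y - x)) in e2 by (unfold z; ring).
  assert (0 <= lam * (1 - lam) * (y - x)) by (apply Rmult_le_pos; nra).
  nra. }
intros x y lam hx hy hlam. destruct (Rle_dec x y).
- apply ordered; lra.
- replace (lam * f x + (1 - lam) * f y) with ((1 - lam) * f y + (1 - (1 - lam)) * f x) by ring.
  replace (lam * x + (1 - lam) * y) with ((1 - lam) * y + (1 - (1 - lam)) * x) by ring.
  apply ordered; lra.
Qed.

Lemma concave_on_ext (f g : R -> R) (a b : R) :
  (forall x, a <= x <= b -> f x = g x) -> concave_on g a b -> concave_on f a b.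
Proof.
intros hfg hg x y lam hx hy hlam.
assert (a <= lam * x + (1 - lam) * y <= b) by nra.
rewrite !hfg by assumption. apply hg; assumption.
Qed.

Lemma is_derive_Rpower_base x y : 0 < x -> is_derive (fun x => Rpower x y) x (y * Rpower x (y - 1)).
Proof. intros hx. apply is_derive_Reals, derivable_pt_lim_power, hx. Qed.

Definition M (u : R) : R := (1 + 2 * u ^ 2) * (1 + u ^ 2).
Definition A (u : R) : R := (4 * psi - 5 * u) * M u - u * (psi - u) * (6 * u + 8 * u ^ 3).
Definition G (u : R) : R := u ^ 4 * (psi - u) / M u.
Definition Q (u : R) : R :=
  1352/625 - 533/50 * u - 4244/625 * u ^ 2 - 1716/125 * u ^ 3 - 18758/625 * u ^ 4
  + 4901/250 * u ^ 5 - 637/25 * u ^ 6 + 3588/125 * u ^ 7 + 72/25 * u ^ 8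
  - 26/5 * u ^ 9 + 108/25 * u ^ 10.

Definition slope (u : R) : R := q * Rpower (G u) (q - 1) * (- A u / (4 * M u)).
Definition slope_deriv (u : R) : R :=
  q * Rpower (G u) (q - 1) / G u * (- (u ^ 3 * Q u) / (4 * M u ^ 3)).

Lemma M_pos u : 0 < M u.
Proof. unfold M; nra. Qed.

Lemma G_pos u : 0 < u < psi -> 0 < G u.
Proof.
intros [u_pos u_psi]. apply Rdiv_lt_0_compat; [|apply M_pos].
apply Rmult_lt_0_compat; [apply pow_lt|]; lra.
Qed.

Lemma is_derive_G u : is_derive G u (u ^ 3 * A u / M u ^ 2).
Proof.
pose proof (M_pos u) as hM. unfold G, A, M in *. auto_derive.
- nra.
- field. nra.
Qed.

Lemma is_derive_slope u : 0 < u < psi -> is_derive slope u (slope_deriv u).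
Proof.
intros hu. pose proof (G_pos u hu) as hG. pose proof (M_pos u) as hM.
unfold slope, slope_deriv, Rpower, G, A, M in *. auto_derive.
- repeat split; try lra. exact hG.
- destruct hu as [h1 h2]. set (E := exp _). unfold Q, q, psi in *. field.
  repeat split; nra.
Qed.

Lemma Q_nonpos u : 7/40 <= u <= 1 -> Q u <= 0.
Proof.
intros hu. set (v := u - 7/40).
assert (hv : 0 <= v <= 33/40) by (unfold v; lra).
(* Horner form of the Taylor expansion at 7/40, where Q is only about -0.0094; the bounds on
   the Horner tails show that the negative low-order coefficients dominate on [0, 33/40]. *)
replace (Q u) with (-612521197359777/65536000000000000 + v*(-2436072596780181/163840000000000
  + v*(-153352439494077/8192000000000 + v*(-780943346147/25600000000 + v*(-48825177277/2560000000
  + v*(1878206957/160000000 + v*(17059007/1600000 + v*(297813/10000 + v*(1287/2000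
  + v*(59/25 + v*(108/25)))))))))))
  by (unfold Q, v; field).
clearbody v. destruct hv as [v0 v1].
assert (T5 : 0 <= v*(59/25 + v*(108/25)) <= 7) by nra.
assert (T4 : 0 <= v*(1287/2000 + v*(59/25 + v*(108/25))) <= 8) by nra.
assert (T3 : 0 <= v*(297813/10000 + v*(1287/2000 + v*(59/25 + v*(108/25)))) <= 38) by nra.
assert (T2 : 0 <= v*(17059007/1600000 + v*(297813/10000 + v*(1287/2000 + v*(59/25
  + v*(108/25))))) <= 49) by nra.
set (T := 1878206957/160000000 + v*(17059007/1600000 + v*(297813/10000 + v*(1287/2000
  + v*(59/25 + v*(108/25)))))).
assert (hT : 0 <= T <= 61) by (unfold T; lra). clearbody T.
set (X4 := -48825177277/2560000000 + v*T).
assert (H4 : X4 <= 32) by (unfold X4; nra). clearbody X4.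
set (X3 := -780943346147/25600000000 + v*X4).
assert (H3 : X3 <= 0) by (unfold X3; nra). clearbody X3.
set (X2 := -153352439494077/8192000000000 + v*X3).
assert (H2 : X2 <= 0) by (unfold X2; nra). clearbody X2.
nra.
Qed.

Lemma slope_deriv_nonneg u : 7/40 <= u <= 1 -> 0 <= slope_deriv u.
Proof.
intros hu. assert (hu' : 0 < u < psi) by (unfold psi; lra).
pose proof (G_pos u hu') as hG. pose proof (M_pos u) as hM. pose proof (Q_nonpos u hu) as hQ.
assert (hu3 : 0 < u ^ 3) by (apply pow_lt; lra).
assert (hM3 : 0 < M u ^ 3) by (apply pow_lt; lra).
assert (hR : 0 < Rpower (G u) (q - 1)) by apply exp_pos.
unfold slope_deriv. apply Rmult_le_pos.
- apply Rmult_le_pos; [apply Rmult_le_pos; [unfold q; lra | lra]|].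
  left; apply Rinv_0_lt_compat; lra.
- unfold Rdiv. apply Rmult_le_pos; [nra|]. left; apply Rinv_0_lt_compat; lra.
Qed.

Lemma slope_nondecreasing u1 u2 : 7/40 <= u1 <= u2 -> u2 <= 1 -> slope u1 <= slope u2.
Proof.
apply (nondecreasing_of_derive_nonneg slope slope_deriv).
- intros u hu. apply is_derive_slope. unfold psi; lra.
- exact slope_deriv_nonneg.
Qed.

Definition s_of (t : R) : R := sqrt (1 - exp t).
Definition u_of (t : R) : R := sqrt (s_of t / (1 - s_of t)).

Lemma s_of_sqr t : t <= 0 -> s_of t * s_of t = 1 - exp t.
Proof.
intros ht. apply sqrt_sqrt. rewrite <- exp_0 at 1.
destruct ht as [ht | ->]; [pose proof (exp_increasing _ _ ht) |]; lra.
Qed.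

Lemma s_of_bounds t : t < 0 -> 0 < s_of t < 1.
Proof.
intros ht. assert (hexp : 0 < exp t < 1).
{ split; [apply exp_pos | rewrite <- exp_0; apply exp_increasing; lra]. }
pose proof (s_of_sqr t ltac:(lra)). assert (0 < s_of t) by (apply sqrt_lt_R0; lra). nra.
Qed.

Lemma u_of_pos t : t < 0 -> 0 < u_of t.
Proof.
intros ht. pose proof (s_of_bounds t ht). apply sqrt_lt_R0, Rdiv_lt_0_compat; lra.
Qed.

Lemma u_of_sqr t : t < 0 -> u_of t ^ 2 = s_of t / (1 - s_of t).
Proof.
intros ht. pose proof (s_of_bounds t ht). apply pow2_sqrt.
apply Rlt_le, Rdiv_lt_0_compat; lra.
Qed.

Lemma g2_exp t : t < 0 -> g2 (exp t) = G (u_of t).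
Proof.
intros ht. pose proof (s_of_bounds t ht) as hs. pose proof (s_of_sqr t ltac:(lra)) as hs2.
pose proof (u_of_sqr t ht) as hu2.
unfold g2, h, chi. replace (1 / 2) with (/ 2) by field.
rewrite (Rpower_sqrt (1 - exp t)) by nra. fold (s_of t).
rewrite Rpower_sqrt by (apply Rdiv_lt_0_compat; lra). fold (u_of t).
replace (exp t) with (1 - s_of t * s_of t) by lra.
unfold G, M. replace (u_of t ^ 4) with ((u_of t ^ 2) ^ 2) by ring. rewrite hu2.
field. repeat split; nra.
Qed.

Lemma is_derive_u_of t : t < 0 -> is_derive u_of t (- M (u_of t) / (4 * u_of t ^ 3)).
Proof.
intros ht. pose proof (s_of_bounds t ht) as hs. pose proof (s_of_sqr t ltac:(lra)) as hs2.
pose proof (u_of_pos t ht) as hu. pose proof (u_of_sqr t ht) as hu2.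
unfold u_of, s_of in *. auto_derive.
- replace (1 + - exp t) with (1 - exp t) by ring. set (s := sqrt (1 - exp t)) in *.
  repeat split; try nra. apply Rmult_lt_0_compat; [lra | apply Rinv_0_lt_compat; lra].
- replace (1 + - exp t) with (1 - exp t) by ring. set (s := sqrt (1 - exp t)) in *.
  replace (1 + - s) with (1 - s) by ring. fold (s / (1 - s)).
  set (u := sqrt (s / (1 - s))) in *.
  replace (exp t) with (1 - s * s) by lra. clearbody u s.
  unfold M. replace (u ^ 3) with (u * u ^ 2) by ring. rewrite hu2.
  field. repeat split; lra.
Qed.

Lemma is_derive_pow_G_u_of t : t < 0 -> u_of t < psi ->
  is_derive (fun t => Rpower (G (u_of t)) q) t (slope (u_of t)).
Proof.
intros ht hpsi. pose proof (u_of_pos t ht) as hu. pose proof (M_pos (u_of t)) as hM.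
pose proof (G_pos (u_of t) (conj hu hpsi)) as hG.
eapply is_derive_ext; [intro; reflexivity|].
replace (slope (u_of t)) with
  ((- M (u_of t) / (4 * u_of t ^ 3)) *
   ((u_of t ^ 3 * A (u_of t) / M (u_of t) ^ 2) * (q * Rpower (G (u_of t)) (q - 1)))).
- apply (is_derive_comp (fun u => Rpower (G u) q) u_of).
  + apply (is_derive_comp (fun x => Rpower x q) G).
    * apply is_derive_Rpower_base, hG.
    * apply is_derive_G.
  + apply is_derive_u_of, ht.
- unfold slope. field. split; lra.
Qed.

Lemma u_of_antitone t1 t2 : t1 <= t2 -> t2 < 0 -> u_of t2 <= u_of t1.
Proof.
intros h12 h2.
assert (hexp : exp t1 <= exp t2) by (destruct h12 as [h | ->]; [left; apply exp_increasing |]; lra).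
pose proof (s_of_bounds t1 ltac:(lra)). pose proof (s_of_bounds t2 h2).
pose proof (s_of_sqr t1 ltac:(lra)). pose proof (s_of_sqr t2 ltac:(lra)).
assert (hs : s_of t2 <= s_of t1) by nra.
apply sqrt_le_1_alt. apply Rmult_le_reg_r with ((1 - s_of t1) * (1 - s_of t2)); [nra|].
field_simplify; nra.
Qed.

Lemma u_of_left_end : u_of (ln (3 / 4)) = 1.
Proof.
unfold u_of, s_of. rewrite exp_ln by lra.
replace (1 - 3 / 4) with (/ 2 * / 2) by field. rewrite sqrt_square by lra.
replace (/ 2 / (1 - / 2)) with 1 by field. exact sqrt_1.
Qed.

Lemma u_of_right_end : 7 / 40 <= u_of (ln (1088 / 1089)).
Proof.
unfold u_of, s_of. rewrite exp_ln by lra.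
replace (1 - 1088 / 1089) with (/ 33 * / 33) by field. rewrite sqrt_square by lra.
rewrite <- (sqrt_square (7 / 40)) by lra. apply sqrt_le_1_alt.
apply Rmult_le_reg_r with (1 - / 33); [lra|]. field_simplify; lra.
Qed.

Lemma u_of_range t : ln (3 / 4) <= t <= ln (1088 / 1089) -> t < 0 /\ 7 / 40 <= u_of t <= 1.
Proof.
intros [h1 h2].
assert (hneg : ln (1088 / 1089) < 0) by (rewrite <- ln_1; apply ln_increasing; lra).
split; [lra | split].
- apply Rle_trans with (1 := u_of_right_end). apply u_of_antitone; lra.
- rewrite <- u_of_left_end. apply u_of_antitone; lra.
Qed.

Theorem lemma47 :
  concave_on (fun t => Rpower (g2 (exp t)) q)
    (ln (3 / 4))
    (ln (1 - 1 / (2 ^ (Delta_deg - 1) + 1) ^ 2)).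
Proof.
replace (1 - 1 / (2 ^ (Delta_deg - 1) + 1) ^ 2) with (1088 / 1089)
  by (unfold Delta_deg; simpl; field).
apply concave_on_ext with (g := fun t => Rpower (G (u_of t)) q).
{ intros t ht. destruct (u_of_range t ht) as [hneg _]. rewrite g2_exp by exact hneg. reflexivity. }
apply concave_on_of_derive_nonincreasing with (df := fun t => slope (u_of t)).
- intros t ht. destruct (u_of_range t ht) as [hneg hu].
  apply is_derive_pow_G_u_of; [exact hneg | unfold psi; lra].
- intros x y hxy hy.
  destruct (u_of_range x ltac:(lra)) as [_ hx]. destruct (u_of_range y ltac:(lra)) as [hneg hy'].
  apply slope_nondecreasing; [split; [lra | apply u_of_antitone; lra] | lra].
Qed.
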